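(* Let $(X,\Psi)$ be a $\sigma$-compact uniform space and $Y\subseteq X$. The following are equivalent: (1) $X$ satisfies $\textsf{S}_1(\Omega,\Omega_Y)$; (2) for each positive integer $k$, $\Omega\rightarrow(\Omega_Y)^2_k$ holds.
   Context: A uniformity on $X$ is a filter $\Psi$ on $X\times X$ whose members contain the diagonal, closed under $U\mapsto U^{-1}$, such that for each $U\in\Psi$ there is $V\in\Psi$ with $V\circ V\subseteq U$, and with $\bigcap\Psi$ equal to the diagonal; $X$ carries the topology with neighbourhood bases $\{U(x):U\in\Psi\}$, $U(x)=\{y:(x,y)\in U\}$. $\sigma$-compact: countable union of compact sets. $\Omega$ is the set of $\omega$-covers of $X$: open covers $\mathcal{U}$ with $X\notin\mathcal{U}$ such that each finite subset of $X$ lies in some member. $\Omega_Y$ is the set of $\omega$-covers of $Y$ by sets open in $X$: families of open subsets of $X$, none containing $Y$, such that each finite subset of $Y$ lies in some member. $\textsf{S}_1(\mathcal{A},\mathcal{B})$: for every sequence $(O_n)$ of elements of $\mathcal{A}$ there are $T_n\in O_n$ with $\{T_n:n\in\mathbb{N}\}\in\mathcal{B}$. $\mathcal{A}\rightarrow(\mathcal{B})^2_k$: for each $A\in\mathcal{A}$ and $f:[A]^2\to\{1,\dots,k\}$ there are $i$ and $B\subseteq A$, $B\in\mathcal{B}$, with $f$ constant equal to $i$ on the 2-element subsets of $B$. *)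

From HB Require Import structures.
From mathcomp Require Import all_boot all_order all_algebra.
From mathcomp Require Import all_classical all_reals all_analysis.
Set Implicit Arguments. Unset Strict Implicit. Unset Printing Implicit Defensive.
Local Open Scope classical_set_scope.

Definition entourage_separated (T : uniformType) : Prop :=
  forall x y : T, (forall U, entourage U -> U (x, y)) -> x = y.

Definition sigma_compact (T : topologicalType) : Prop :=
  exists K : nat -> set T, (forall n, compact (K n)) /\ \bigcup_n K n = setT.

Definition omega_cover_of (T : topologicalType) (Y : set T)
    (U : set (set T)) : Prop :=
  (forall W, U W -> open W) /\
  (forall W, U W -> ~ (Y `<=` W)) /\
  (forall F, finite_set F -> F `<=` Y -> exists2 W, U W & F `<=` W).

Definition omega_cover (T : topologicalType) (U : set (set T)) : Prop :=
  (forall W, U W -> open W) /\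
  ~ U setT /\
  (forall F, finite_set F -> exists2 W, U W & F `<=` W).

Definition S1 (T : Type) (A B : set (set T) -> Prop) : Prop :=
  forall O : nat -> set (set T), (forall n, A (O n)) ->
    exists Tn : nat -> set T, (forall n, O n (Tn n)) /\ B (range Tn).

Definition two_subset (S : Type) (A : set S) (P : set S) : Prop :=
  exists x y, x <> y /\ A x /\ A y /\ P = [set x; y].

(* A -> (B)^2_k, colours 'I_k = {0,...,k-1} standing for {1,...,k};
   a colouring of [A]^2 is given by a function on all sets of sets,
   only its values on [A]^2 matter. *)
Definition partition_rel (T : Type) (A B : set (set T) -> Prop) (k : nat) : Prop :=
  forall U : set (set T), A U ->
  forall f : set (set T) -> 'I_k,
    exists (i : 'I_k) (V : set (set T)),
      V `<=` U /\ B V /\ (forall P, two_subset V P -> f P = i).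

(* Either property forces X \ Y to be finite: otherwise the punctured sets
   X \ {x}, x \notin Y, form an omega-cover of X no subfamily of which is an
   omega-cover of Y.

   (1) -> (2): the index sets M on which an enumerated omega-subcover (u_m) of
   U still omega-covers Y are partition regular, so there are decreasing such
   sets M_n on which the colour of {u_n, u_m} is a constant c_n.  Selecting
   u_(g j) with g j in M_(j+1), and then one index per block of a partition of
   the stages into blocks spaced so that g j <= j' whenever j' lies two blocks
   after j, the pair {u_(g j), u_(g j')} gets colour c_(g j).  Keeping blocks of
   one parity and one value of c_(g j) gives a homogeneous omega-cover of Y.

   (2) -> (1): with distinct points d_n of Y, the sets A \ {d_n}, for A in O_n
   containing X \ Y and d_0, ..., d_(n-1), form an omega-cover of X; colour a
   pair by whether both members come from the same O_n.  A homogeneous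
   omega-cover of Y cannot have the "same O_n" colour, so it meets each O_n at
   most once, which yields the selection. *)

From mathcomp Require Import all_boot all_order all_algebra.
From mathcomp Require Import all_classical all_reals all_analysis.
From mathcomp Require Import zify.
Set Implicit Arguments. Unset Strict Implicit. Unset Printing Implicit Defensive.
Local Open Scope classical_set_scope.

Lemma choice_history (A : Type) (P : seq A -> A -> Prop) :
  (forall s, exists a, P s a) ->
  exists r : nat -> A, forall n, P [seq r i | i <- iota 0 n] (r n).
Proof.
move=> /choice[next nextP].
pose hist := fix hist n := if n is m.+1 then rcons (hist m) (next (hist m)) else [::].
exists (fun n => next (hist n)) => n.
suff -> : [seq next (hist i) | i <- iota 0 n] = hist n by [].
elim: n => [//|n IH]; rewrite [RHS]/=.
by rewrite -addn1 iotaD map_cat IH cats1.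
Qed.

Lemma exists_notin (T : eqType) (s L : seq T) :
  uniq s -> (size L < size s)%N -> exists2 x, x \in s & x \notin L.
Proof.
move=> us Ls; have /hasP[x xs xL] : has [predC L] s.
  apply: contraT => /hasPn sL; rewrite ltnNge in Ls; apply: contraNT Ls => _.
  by apply: uniq_leq_size => // x /sL; rewrite negbK.
by exists x.
Qed.

Lemma spacing_blocks (g : nat -> nat) : exists b : nat -> nat,
  (forall s, exists N, forall j, (N <= j)%N -> (s <= b j)%N) /\
  (forall j j', ((b j).+2 <= b j')%N -> (g j <= j')%N).
Proof.
pose a := fix a s := if s is s'.+1 then (a s' + \max_(i < a s') g i).+1 else 0%N.
have a_lt s : (a s < a s.+1)%N by rewrite /= ltnS leq_addr.
have a_mono : {homo a : s t / (s <= t)%N} := homo_leq leqnn leq_trans (fun s => ltnW (a_lt s)).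
have s_le_a s : (s <= a s)%N by elim: s => // s IH; exact: leq_ltn_trans IH (a_lt s).
have a_block j : exists s, (j < a s.+1)%N := ex_intro _ j (leq_ltn_trans (s_le_a j) (a_lt j)).
pose b j := ex_minn (a_block j).
have b_hi j : (j < a (b j).+1)%N by rewrite /b; case: ex_minnP.
have b_lo j : (a (b j) <= j)%N.
  rewrite /b; case: ex_minnP => -[//|s] _ bmin.
  by rewrite leqNgt; apply/negP => /bmin; rewrite ltnn.
exists b; split=> [s|j j' gap].
  exists (a s) => j sj; rewrite leqNgt; apply/negP => bs.
  by have := leq_trans (b_hi j) (a_mono _ _ bs); rewrite ltnNge sj.
have gj : (g j < a (b j).+2)%N.
  rewrite [a (b j).+2]/= ltnS; apply: leq_trans (leq_addl _ _).
  exact: (leq_bigmax (F := fun i : 'I_(a (b j).+1) => g i) (Ordinal (b_hi j))).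
exact: ltnW (leq_trans gj (leq_trans (a_mono _ _ gap) (b_lo j'))).
Qed.

Lemma infinite_injective_seq (T : Type) (A : set T) :
  infinite_set A -> exists d : nat -> T, (forall n, A (d n)) /\ injective d.
Proof.
elim/Ppointed: T => T in A *; first by rewrite emptyE => /(_ (finite_set0 _)).
move=> /infiniteP/ppcard_leP[d]; exists d; split; first by move=> n; apply: funS.
by move=> m n; apply: (@inj _ _ _ d); rewrite inE.
Qed.

Lemma injective_seq_notin (T : Type) (d : nat -> T) (F : set T) :
  injective d -> finite_set F -> exists n, ~ F (d n).
Proof.
move=> dinj fF; apply/existsNP => dF; apply: infinite_nat.
rewrite -(eq_finite_set (inj_card_eq (fun m n _ _ => dinj m n))).
by apply: sub_finite_set fF => _ [n _ <-].
Qed.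

Lemma two_subset_image (A B : Type) (v : A -> B) (N : set A) (P : set B) :
  two_subset (v @` N) P ->
  exists n n', [/\ N n, N n', v n <> v n' & P = [set v n; v n']].
Proof. by move=> [x [y [xy [[n Nn nx] [[n' Nn' n'y] ->]]]]]; exists n, n'; subst. Qed.

Section OmegaIndex.
Variables (T : Type) (Y : set T) (u : nat -> set T).

Definition omega_index (M : set nat) :=
  forall F, finite_set F -> F `<=` Y -> exists2 m, M m & F `<=` u m.

Lemma omega_indexS (M M' : set nat) : M `<=` M' -> omega_index M -> omega_index M'.
Proof. by move=> MM' uM F fF FY; have [m Mm Fm] := uM F fF FY; exists m => //; apply: MM'. Qed.

Lemma omega_index_split (M A : set nat) :
  omega_index M -> omega_index (M `&` A) \/ omega_index (M `\` A).
Proof.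
move=> uM; apply: contrapT => /not_orP[].
move=> /existsNP[F1 /not_implyP[fF1 /not_implyP[F1Y nF1]]].
move=> /existsNP[F2 /not_implyP[fF2 /not_implyP[F2Y nF2]]].
have [m Mm Fm] : exists2 m, M m & F1 `|` F2 `<=` u m.
  by apply: uM; [rewrite finite_setU | rewrite subUset].
have [Am|nAm] := pselect (A m).
  by apply: nF1; exists m => // x F1x; apply: Fm; left.
by apply: nF2; exists m => // x F2x; apply: Fm; right.
Qed.

Lemma omega_index_partition (M : set nat) k (h : nat -> nat) :
  omega_index M -> (forall m, M m -> (h m < k)%N) ->
  exists2 c, (c < k)%N & omega_index (M `&` [set m | h m = c]).
Proof.
elim: k M => [|k IH] M uM hk.
  by have [m Mm _] := uM set0 (finite_set0 _) (sub0set _); have := hk m Mm.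
have [|uMD] := omega_index_split [set m | h m = k] uM; first by exists k.
have [|c ck uc] := IH _ uMD.
  by move=> m [Mm /eqP hmk]; have := hk m Mm; rewrite ltnS leq_eqVlt (negbTE hmk).
by exists c; [exact: ltnW | apply: omega_indexS uc => m [[]]].
Qed.

Lemma omega_index_tail (M : set nat) N : (forall m, ~ Y `<=` u m) ->
  omega_index M -> omega_index (M `&` [set m | (N <= m)%N]).
Proof.
move=> uY uM F fF FY.
have /choice[x xP] : forall m, exists x, Y x /\ ~ u m x.
  by move=> m; have /existsNP[x /not_implyP[]] := uY m; exists x.
have [m Mm Fm] : exists2 m, M m & F `|` x @` `I_N `<=` u m.
  apply: uM; first by rewrite finite_setU; split => //; exact/finite_image/finite_II.
  by rewrite subUset; split => // _ [i _ <-]; exact: (xP i).1.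
exists m; last by move=> y Fy; apply: Fm; left.
split => //; rewrite /= leqNgt; apply/negP => mN.
by apply: (xP m).2; apply: Fm; right; exists m.
Qed.

Lemma omega_index_chain k (col : nat -> nat -> nat) :
  omega_index setT -> (forall n m, (col n m < k)%N) ->
  exists (M : nat -> set nat) (c : nat -> nat),
    [/\ forall n, omega_index (M n),
        forall n n', (n <= n')%N -> M n' `<=` M n,
        forall n, (c n < k)%N &
        forall n m, M n.+1 m -> col n m = c n].
Proof.
move=> uT colk.
have /choice[next nextP] : forall nM : nat * set nat, exists c, omega_index nM.2 ->
    (c < k)%N /\ omega_index (nM.2 `&` [set m | col nM.1 m = c]).
  move=> [n M]; have [uM|nuM] := pselect (omega_index M); last by exists 0%N => /nuM.
  by have [c ck uc] := omega_index_partition uM (fun m _ => colk n m); exists c.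
pose M := fix M n := if n is n'.+1 then M n' `&` [set m | col n' m = next (n', M n')]
                     else setT.
have MY n : omega_index (M n) by elim: n => //= n IH; have [] := nextP (n, M n) IH.
exists M, (fun n => next (n, M n)); split => //.
- apply: (homo_leq (r := fun A B => B `<=` A)) => [A|A B C BA CB|n] //.
    exact: subset_trans CB BA.
  exact: subIsetl.
- by move=> n; have [] := nextP (n, M n) (MY n).
- by move=> n m [].
Qed.

End OmegaIndex.

Lemma entourage_separated_accessible (T : uniformType) :
  entourage_separated T -> accessible_space T.
Proof.
move=> sep; apply: hausdorff_accessible => x y xy.
by apply: sep; rewrite -entourage_close closeEnbhs.
Qed.

Lemma omega_cover_infinite (T : topologicalType) (U : set (set T)) :
  omega_cover U -> infinite_set [set: T].
Proof.
move=> [_ [UT Ufin]] fT; have [W UW] := Ufin _ fT.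
by rewrite subTset => WT; apply: UT; rewrite -WT.
Qed.

Section Covers.
Variables (T : topologicalType) (Y : set T).

Lemma omega_cover_of_compl_sub (U : set (set T)) :
  omega_cover_of Y U -> (forall W, U W -> ~` Y `<=` W) -> omega_cover U.
Proof.
move=> [Uo [UY Ufin]] UC; split=> //; split; first by move=> /UY; apply.
move=> F fF; have [W UW FW] : exists2 W, U W & F `&` Y `<=` W.
  by apply: Ufin; [exact: finite_setIl | exact: subIsetr].
exists W => // x Fx; have [Yx|nYx] := pselect (Y x); first exact: FW.
exact: UC.
Qed.

Definition proper_seq (u : nat -> set T) :=
  forall m, [/\ open (u m), ~ Y `<=` u m & ~` Y `<=` u m].

Lemma omega_cover_of_image (u : nat -> set T) (M : set nat) :
  proper_seq u -> omega_index Y u M -> omega_cover_of Y (u @` M).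
Proof.
move=> pu uM; split; first by move=> _ [m _ <-]; have [] := pu m.
split; first by move=> _ [m _ <-]; have [] := pu m.
by move=> F fF FY; have [m Mm Fm] := uM F fF FY; exists (u m) => //; exists m.
Qed.

Lemma omega_cover_image (u : nat -> set T) (M : set nat) :
  proper_seq u -> omega_index Y u M -> omega_cover (u @` M).
Proof.
move=> pu uM; apply: omega_cover_of_compl_sub; first exact: omega_cover_of_image.
by move=> _ [m _ <-]; have [] := pu m.
Qed.

Lemma omega_index_range (u : nat -> set T) :
  omega_cover_of Y (range u) -> omega_index Y u setT.
Proof. by move=> [_ [_ uY]] F fF FY; have [_ [m _ <-] Fm] := uY F fF FY; exists m. Qed.

Section S1Selection.
Hypothesis S1Y : S1 (@omega_cover T) (omega_cover_of Y).

Lemma S1_enumeration (U : set (set T)) : finite_set (~` Y) -> omega_cover U ->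
  exists u, [/\ forall m, U (u m), proper_seq u & omega_index Y u setT].
Proof.
move=> cofY [Uo [UT Ufin]].
have UC : omega_cover (U `&` [set A | ~` Y `<=` A]).
  split; first by move=> W [/Uo].
  split; first by move=> [/UT].
  move=> F fF; have [A UA] : exists2 A, U A & F `|` ~` Y `<=` A.
    by apply: Ufin; rewrite finite_setU.
  by rewrite subUset => -[FA YA]; exists A.
have [u [uU uY]] := S1Y (fun _ => UC).
exists u; split; [by move=> m; have [] := uU m | | exact: omega_index_range].
have [uo [unY _]] := uY.
by move=> m; split; [apply: uo; exists m | apply: unY; exists m | have [] := uU m].
Qed.

Lemma S1_omega_index (u : nat -> set T) (M : nat -> set nat) :
  proper_seq u -> (forall n, omega_index Y u (M n)) ->
  exists g, (forall n, M n (g n)) /\ omega_index Y (u \o g) setT.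
Proof.
move=> pu uM; have [I [IM IY]] := S1Y (fun n => omega_cover_image pu (uM n)).
have /choice[g gP] : forall n, exists m, M n m /\ u m = I n.
  by move=> n; have [m Mm umI] := IM n; exists m.
exists g; split; first by move=> n; have [] := gP n.
apply: omega_index_range; suff -> : u \o g = I by [].
by apply/funext => n; exact: (gP n).2.
Qed.

Lemma omega_index_uniq_blocks (w : nat -> set T) (b : nat -> nat) :
  proper_seq w -> omega_index Y w setT ->
  (forall s, exists N, forall j, (N <= j)%N -> (s <= b j)%N) ->
  forall F, finite_set F -> F `<=` Y -> forall n, exists s : seq nat,
    [/\ size s = n.+1, uniq (map b s) & forall j, j \in s -> F `<=` w j].
Proof.
move=> pw wY btail F fF FY; elim=> [|n [s [sn us Fs]]].
  by have [j _ Fj] := wY F fF FY; exists [:: j]; split => // i; rewrite inE => /eqP->.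
have [N bN] := btail (\max_(j <- s) b j).+1.
have wnY m : ~ Y `<=` w m by have [] := pw m.
have [j [_ Nj] Fj] := omega_index_tail N wnY wY fF FY.
exists (j :: s); split => /=; first by rewrite sn.
  rewrite us andbT; apply/mapP => -[i iS bij]; have := bN j Nj.
  by rewrite bij ltnNge => /negP; apply; apply: leq_bigmax_seq.
by move=> i; rewrite inE => /orP[/eqP->|/Fs].
Qed.

Lemma S1_block_injective (w : nat -> set T) (b : nat -> nat) :
  proper_seq w -> omega_index Y w setT ->
  (forall s, exists N, forall j, (N <= j)%N -> (s <= b j)%N) ->
  exists r, injective (b \o r) /\ omega_index Y (w \o r) setT.
Proof.
move=> pw wY btail.
pose C n := [set \bigcap_(j in [set` s]) w j |
             s in [set s : seq nat | size s = n.+1 /\ uniq (map b s)]].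
have C_omega n : omega_cover (C n).
  apply: omega_cover_of_compl_sub; last first.
    by move=> _ [s _ <-] x nYx j _; have [_ _] := pw j; apply.
  split; [|split].
  - move=> _ [s _ <-]; rewrite bigcap_seq.
    by apply: big_ind => [|A B|j _]; [exact: openT|exact: openI|have [] := pw j].
  - move=> _ [[|j s] [//= _ _] <-] Ys; have [_ nY _] := pw j.
    by apply: nY => y /Ys; apply; rewrite /= inE eqxx.
  - move=> F fF FY; have [s [sn us Fs]] := omega_index_uniq_blocks pw wY btail fF FY n.
    by exists (\bigcap_(j in [set` s]) w j); [exists s | move=> x Fx j /Fs; apply].
have [I [CI IY]] := S1Y C_omega.
have /choice[s sP] : forall n, exists s : seq nat,
    [/\ size s = n.+1, uniq (map b s) & I n = \bigcap_(j in [set` s]) w j].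
  by move=> n; have [s [sn us] <-] := CI n; exists s.
have /choice_history[r rP] : forall L : seq nat,
    exists a, a \in s (size L) /\ b a \notin map b L.
  move=> L; have [sn us _] := sP (size L).
  have [|_ /mapP[a aS ->] aL] := exists_notin (L := map b L) us.
    by rewrite !size_map sn.
  by exists a.
exists r; split.
  have past n t : (t < n)%N -> b (r t) != b (r n).
    move=> tn; have [_] := rP n; apply: contra => /eqP <-.
    by rewrite -map_comp map_f // mem_iota.
  move=> t n /= btn; case: (ltngtP t n) => // [tn|nt].
    by have := past _ _ tn; rewrite btn eqxx.
  by have := past _ _ nt; rewrite btn eqxx.
move=> F fF FY; have [_ [n _ <-] FIn] := IY.2.2 F fF FY.
exists n => //; have [_ _ In] := sP n; have [rs _] := rP n.
move: rs; rewrite size_map size_iota => rs x /FIn; rewrite In; apply; exact: rs.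
Qed.

End S1Selection.
End Covers.

Section Punctures.
Variables (T : topologicalType) (Y : set T).

Definition punctures := [set ~` [set x] | x in ~` Y].

Lemma punctures_omega_cover : accessible_space T -> infinite_set (~` Y) ->
  omega_cover punctures.
Proof.
move=> T1 infY; split; [|split].
- by move=> _ [x _ <-]; rewrite openC; exact: accessible_closed_set1.
- by move=> [x _ xT]; have /(_ erefl) : (~` [set x]) x by rewrite xT.
- move=> F fF; have [x [nYx nFx]] : exists x, ~ Y x /\ ~ F x.
    apply/not_existsP => YF; apply: infY; apply: sub_finite_set fF => x nYx.
    by apply: contrapT => nFx; apply: (YF x).
  by exists (~` [set x]); [exists x | move=> y Fy /= yx; apply: nFx; rewrite -yx].
Qed.

Lemma punctures_not_omega_cover_of (V : set (set T)) :
  V `<=` punctures -> ~ omega_cover_of Y V.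
Proof.
move=> Vp [_ [VY Vfin]]; have [W VW _] := Vfin set0 (finite_set0 _) (sub0set _).
have [x nYx xW] := Vp W VW; apply: (VY W VW); rewrite -xW => y Yy /= yx.
by apply: nYx; rewrite -yx.
Qed.

Lemma S1_compl_finite : accessible_space T ->
  S1 (@omega_cover T) (omega_cover_of Y) -> finite_set (~` Y).
Proof.
move=> T1 S1Y; apply: contrapT => infY.
have [I [Ip IY]] := S1Y _ (fun _ => punctures_omega_cover T1 infY).
by apply: (punctures_not_omega_cover_of (V := range I)) IY => _ [n _ <-].
Qed.

Lemma partition_rel_compl_finite k : accessible_space T -> (0 < k)%N ->
  partition_rel (@omega_cover T) (omega_cover_of Y) k -> finite_set (~` Y).
Proof.
move=> T1 k0 hP; apply: contrapT => infY.
have [_ [V [Vp [VY _]]]] := hP _ (punctures_omega_cover T1 infY) (fun _ => Ordinal k0).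
exact: punctures_not_omega_cover_of Vp VY.
Qed.

End Punctures.

Lemma S1_partition_rel (T : topologicalType) (Y : set T) k :
  S1 (@omega_cover T) (omega_cover_of Y) -> finite_set (~` Y) ->
  partition_rel (@omega_cover T) (omega_cover_of Y) k.
Proof.
move=> S1Y cofY U /(S1_enumeration S1Y cofY)[u [Uu pu uY]] f.
pose col n m := nat_of_ord (f [set u n; u m]).
have [M [c [MY Mdec ck Mc]]] := omega_index_chain uY (fun n m => ltn_ord (f [set u n; u m])).
have [g [gM guY]] := S1_omega_index S1Y pu (fun n => MY n.+1).
have [b [btail bgap]] := spacing_blocks g.
have [r [br vY]] := S1_block_injective S1Y (fun j => pu (g j)) guY btail.
have f_gap j j' : ((b j).+2 <= b j')%N -> col (g j) (g j') = c (g j).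
  by move=> /bgap gj; apply: Mc; apply: Mdec (gM j'); rewrite ltnS.
pose v := u \o g \o r.
have [e _ vY1] := omega_index_partition (h := fun n => b (r n) %% 2)%N vY
  (fun n _ => ltn_pmod (b (r n)) (ltn0Sn 1)).
have [c0 c0k vY2] := omega_index_partition (h := fun n => c (g (r n))) vY1
  (fun n _ => ck _).
exists (Ordinal c0k), (v @` [set n | (b (r n) %% 2 = e)%N /\ c (g (r n)) = c0]).
split; [|split].
- by move=> _ [n _ <-]; exact: Uu.
- apply: omega_cover_of_image => [n|]; first exact: pu.
  by apply: omega_indexS vY2 => n [[_ en] cn].
- move=> P /two_subset_image[n [n' [[en cn] [en' cn'] vnn' ->]]].
  have bnn' : b (r n) <> b (r n') by move=> /br nn'; apply: vnn'; rewrite /v /= nn'.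
  apply: val_inj => /=.
  have [gap|gap] : ((b (r n)).+2 <= b (r n'))%N \/ ((b (r n')).+2 <= b (r n))%N by lia.
    by rewrite -cn -(f_gap _ _ gap).
  by rewrite setUC -cn' -(f_gap _ _ gap).
Qed.

Section Levels.
Variables (T : topologicalType) (Y : set T) (O : nat -> set (set T)) (d : nat -> T).
Hypotheses (T1 : accessible_space T) (O_omega : forall n, omega_cover (O n)).
Hypotheses (dY : forall n, Y (d n)) (d_inj : injective d) (cofY : finite_set (~` Y)).

Definition level n (w : set T) := exists A,
  [/\ O n A, ~` Y `<=` A, (forall i, (i < n)%N -> A (d i)) & w = A `\ d n].

Lemma level_uniq n n' w : level n w -> level n' w -> n = n'.
Proof.
have lt_level m m' : (m < m')%N -> level m w -> level m' w -> False.
  move=> mm' [A [_ _ _ ->]] [B [_ _ Bd wB]].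
  have : (B `\ d m') (d m) by split; [exact: Bd | move=> /d_inj mm; rewrite mm ltnn in mm'].
  by rewrite -wB => -[_]; apply.
move=> ln ln'; case: (ltngtP n n') => // nn'; exfalso.
  exact: lt_level ln ln'.
exact: lt_level ln' ln.
Qed.

Lemma levels_omega_cover : omega_cover [set w | exists n, level n w].
Proof.
apply: (omega_cover_of_compl_sub (Y := Y)); last first.
  move=> _ [n [A [_ YA _ ->]]] x nYx; split; first exact: YA.
  by move=> /= xd; apply: nYx; rewrite xd.
split; [|split].
- move=> _ [n [A [OA _ _ ->]]]; rewrite setDE; apply: openI; first exact: (O_omega n).1.
  by rewrite openC; exact: accessible_closed_set1.
- by move=> _ [n [A [_ _ _ ->]]] /(_ _ (dY n)) [_]; apply.
move=> F fF FY; have [n nFd] := injective_seq_notin d_inj fF.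
have [A OA] : exists2 A, O n A & F `|` ~` Y `|` d @` `I_n `<=` A.
  have [_ [_]] := O_omega n; apply; rewrite !finite_setU; split; [split=> //|].
  exact/finite_image/finite_II.
rewrite !subUset => -[[FA YA] dA]; exists (A `\ d n).
  by exists n, A; split => // i ni; apply: dA; exists i.
by move=> x Fx; split; [exact: FA | move=> /= xd; apply: nFd; rewrite -xd].
Qed.

Lemma levels_distinct_members (V : set (set T)) :
  V `<=` [set w | exists n, level n w] -> omega_cover_of Y V ->
  exists v v' n n', [/\ V v, V v', level n v, level n' v' & n <> n'].
Proof.
move=> Vl [_ [_ Vfin]].
have [v0 Vv0 _] := Vfin set0 (finite_set0 _) (sub0set _).
have [n0 ln0] := Vl v0 Vv0.
have [v Vv dv] : exists2 v, V v & d @` `I_n0.+1 `<=` v.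
  by apply: Vfin; [exact/finite_image/finite_II | move=> _ [j _ <-]].
have [n ln] := Vl v Vv; exists v0, v, n0, n; split => // n0n.
move: ln; rewrite -n0n => -[A [_ _ _ vA]].
by have := dv (d n0) (ex_intro2 _ _ n0 (ltnSn n0) erefl); rewrite vA => -[_]; apply.
Qed.

Lemma levels_selection (V : set (set T)) :
  V `<=` [set w | exists n, level n w] -> omega_cover_of Y V ->
  (forall v v' n, V v -> V v' -> level n v -> level n v' -> v = v') ->
  exists I : nat -> set T, (forall n, O n (I n)) /\ omega_cover_of Y (range I).
Proof.
move=> Vl [_ [_ Vfin]] Vuniq.
have /choice[I IP] : forall n, exists A,
    [/\ O n A, ~` Y `<=` A & forall v, V v -> level n v -> v `<=` A].
  move=> n; have [[v [Vv lv]]|noV] := pselect (exists v, V v /\ level n v).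
    have [A [OA YA _ vA]] := lv; exists A; split => // v' Vv' lv'.
    by rewrite -(Vuniq _ _ _ Vv Vv' lv lv') vA; exact: subDsetl.
  have [A OA YA] := (O_omega n).2.2 _ cofY; exists A; split => // v Vv lv.
  by exfalso; apply: noV; exists v.
exists I; split; first by move=> n; have [] := IP n.
split; [|split].
- by move=> _ [n _ <-]; have [OI _ _] := IP n; exact: (O_omega n).1.
- move=> _ [n _ <-] YI; have [OI YcI _] := IP n; have [_ [nT _]] := O_omega n.
  apply: nT; suff <- : I n = setT by [].
  by apply/seteqP; split=> // x _; have [/YI|/YcI] := pselect (Y x).
- move=> F fF FY; have [v Vv Fv] := Vfin F fF FY; have [n lv] := Vl v Vv.
  by exists (I n); [exists n | have [_ _ /(_ v Vv lv)] := IP n; exact: subset_trans].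
Qed.

End Levels.

Lemma partition_rel2_S1 (T : topologicalType) (Y : set T) : accessible_space T ->
  partition_rel (@omega_cover T) (omega_cover_of Y) 2 ->
  S1 (@omega_cover T) (omega_cover_of Y).
Proof.
move=> T1 hP O O_omega.
have cofY := partition_rel_compl_finite T1 (ltn0Sn 1) hP.
have infY : infinite_set Y.
  by move=> fY; apply: (omega_cover_infinite (O_omega 0)); rewrite -(setUv Y) finite_setU.
have [d [dY d_inj]] := infinite_injective_seq infY.
pose same_level (P : set (set T)) := exists n, P `<=` level Y O d n.
pose f P : 'I_2 := if pselect (same_level P) then ord_max else ord0.
have [i [V [Vl [VY Vi]]]] := hP _ (levels_omega_cover T1 O_omega dY d_inj cofY) f.
have pair_colour v v' : V v -> V v' -> v <> v' -> f [set v; v'] = i.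
  by move=> Vv Vv' vv'; apply: Vi; exists v, v'.
case: i Vi pair_colour => -[|[|//]] i2 _ pair_colour.
- apply: (levels_selection O_omega cofY Vl VY) => v v' n Vv Vv' lv lv'.
  apply: contrapT => vv'; have := pair_colour _ _ Vv Vv' vv'; rewrite /f.
  by case: pselect => [_ /(congr1 val) //|[]]; exists n => _ [->|->].
- exfalso; have [v [v' [n [n' [Vv Vv' lv lv' nn']]]]] := levels_distinct_members dY Vl VY.
  have vv' : v <> v'.
    by move=> vv'; apply: nn'; rewrite vv' in lv; exact: (level_uniq d_inj lv lv').
  have := pair_colour _ _ Vv Vv' vv'; rewrite /f.
  case: pselect => [[m vm] _|_ /(congr1 val) //]; apply: nn'.
  have := level_uniq d_inj (vm v (or_introl erefl)) lv.
  by have := level_uniq d_inj (vm v' (or_intror erefl)) lv' => <- <-.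
Qed.

Theorem theorem4p7 (T : uniformType) (Y : set T) :
  entourage_separated T -> sigma_compact T ->
  (S1 (@omega_cover T) (omega_cover_of Y) <->
   (forall k : nat, (0 < k)%N -> partition_rel (@omega_cover T) (omega_cover_of Y) k)).
Proof.
move=> /entourage_separated_accessible T1 _; split => [S1Y k _|hP].
  exact: S1_partition_rel S1Y (S1_compl_finite T1 S1Y).
exact: partition_rel2_S1 T1 (hP 2 isT).
Qed.
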